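(* Let $\mathscr D:\mathscr N=\mathscr N_1\cup\cdots\cup\mathscr N_k$ be a $\mathscr C_{\mathscr D}$-decomposition of a chemical reaction network $\mathscr N$ with $\mathscr C_{\mathscr D}=\{y_1,y_2\}$ and $\ell>2$, where $\ell$ is the number of linkage classes of $\mathscr N$. If there is at most one path in $\mathscr N$ that connects $y_1$ and $y_2$, then $\mathscr D$ is incidence independent.
   Context: A CRN $\mathscr N=(\mathscr S,\mathscr C,\mathscr R)$ is viewed as a directed graph on its complexes with arcs its reactions; paths are paths in the underlying undirected graph and linkage classes are its connected components. A decomposition $\mathscr N=\mathscr N_1\cup\cdots\cup\mathscr N_k$ ($k\ge 2$) is given by a partition $\{\mathscr R_1,\dots,\mathscr R_k\}$ of the reaction set; the subnetwork $\mathscr N_i$ has reactions $\mathscr R_i$ and complex set $\mathscr C_i$ consisting of complexes occurring in reactions of $\mathscr R_i$. The set $\mathscr C_{\mathscr D}$ of common complexes consists of the complexes lying in the complex sets of at least two distinct subnetworks. A $\mathscr C_{\mathscr D}$-decomposition is one with $\mathscr C_i\cap\mathscr C_j=\mathscr C_{\mathscr D}$ for all $i\ne j$. With $n,\ell$ the numbers of complexes and linkage classes of $\mathscr N$ and $n_i,\ell_i$ those of $\mathscr N_i$, the decomposition is incidence independent if the image of the incidence map of $\mathscr N$ (the linear map $\mathbb R^{\mathscr R}\to\mathbb R^{\mathscr C}$ sending a reaction $y\to y'$ to $\omega_{y'}-\omega_y$) is the direct sum of the images of the incidence maps of the $\mathscr N_i$, equivalently $n-\ell=\sum_i(n_i-\ell_i)$.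 *)

From mathcomp Require Import all_boot all_order all_algebra.
From mathcomp Require Import reals.
Set Implicit Arguments. Unset Strict Implicit. Unset Printing Implicit Defensive.
Import GRing.Theory.
Local Open Scope ring_scope.

(* A chemical reaction network viewed as a directed (multi)graph on its
   complexes: complexes form the finite type [C], reactions the finite type
   [Rx], each reaction r is the arc  src r -> tgt r.  Species play no role in
   the notions below (incidence map, linkage classes, paths). *)
Section CRN.
Variables (C Rx : finType) (src tgt : Rx -> C).

Definition is_CRN : Prop :=
  [/\ forall r, src r != tgt r,
      injective (fun r => (src r, tgt r)) &
      forall y : C, exists r, (src r == y) || (tgt r == y)].

Definition adj (P : pred Rx) : rel C := fun x y =>
  [exists r, P r && (((src r == x) && (tgt r == y)) || ((src r == y) && (tgt r == x)))].

Definition n_linkage : nat := n_comp (adj predT) predT.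

(* decomposition given by part : Rx -> 'I_k (block i is R_i = part^-1(i)) *)
Variables (k : nat) (part : Rx -> 'I_k).

Definition cplx (i : 'I_k) : {set C} :=
  [set y | [exists r, (part r == i) && ((src r == y) || (tgt r == y))]].

Definition n_sub (i : 'I_k) : nat := #|cplx i|.
Definition l_sub (i : 'I_k) : nat :=
  n_comp (adj (fun r => part r == i)) (mem (cplx i)).

Definition common : {set C} :=
  [set y | [exists i, exists j, (i != j) && (y \in cplx i) && (y \in cplx j)]].

Definition is_decomposition : Prop :=
  (2 <= k)%N /\ forall i : 'I_k, exists r, part r == i.

Definition is_CD_decomposition : Prop :=
  forall i j : 'I_k, i != j -> cplx i :&: cplx j = common.

(* incidence map: reaction r |-> omega_{tgt r} - omega_{src r}, as a row
   vector in F^C (coordinates indexed through enum_val). *)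
Variable F : fieldType.
Definition inc_row (r : Rx) : 'rV[F]_#|C| :=
  \row_j (((enum_val j == tgt r)%:R - (enum_val j == src r)%:R) : F).

Definition img (P : pred Rx) : 'M[F]_#|C| := (\sum_(r | P r) <<inc_row r>>)%MS.

(* Directness is stated by the rank equality (this is what MathComp's
   [mxdirect] unfolds to; [mxdirect] itself is avoided because its syntactic
   inference would look through [img_sub] into the inner sums). *)
Definition img_sub (i : 'I_k) : 'M[F]_#|C| := img (fun r => part r == i).

Definition incidence_independent : Prop :=
  (img predT == \sum_(i < k) img_sub i)%MS /\
  \rank (\sum_(i < k) img_sub i)%MS = (\sum_(i < k) \rank (img_sub i))%N.

End CRN.

(* Paths in the underlying undirected multigraph: a path is a sequence of
   reactions (edges) traversed in either direction; [walk_verts x p] gives the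
   visited vertices starting at x (None if p is not a walk from x). *)
Section Paths.
Variables (C Rx : finType) (src tgt : Rx -> C).

Fixpoint walk_verts (x : C) (p : seq Rx) : option (seq C) :=
  match p with
  | [::] => Some [:: x]
  | r :: p' =>
      if src r == x then omap (cons x) (walk_verts (tgt r) p')
      else if tgt r == x then omap (cons x) (walk_verts (src r) p')
      else None
  end.

Definition is_path (x y : C) (p : seq Rx) : bool :=
  if walk_verts x p is Some vs then uniq vs && (last x vs == y) else false.

End Paths.

(* A vector of the image of the incidence map of a subnetwork N_m is supported
   on the complexes of N_m and is orthogonal to the indicator function of every
   linkage class of N_m.  Take vectors u_m in these images summing to zero.  A
   complex outside C_D = {y1, y2} lies in a single subnetwork, so all u_m are
   supported on {y1, y2}.  If y1 and y2 are not linked in N_m, orthogonality to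
   the linkage classes of y1 and of y2 kills both coordinates of u_m.  A path
   linking y1 and y2 inside N_m is a path of N, and paths of two different
   subnetworks differ in their first reaction; so by uniqueness of the path at
   most one u_m survives, and it vanishes because the sum does. *)

From mathcomp Require Import all_boot all_order all_algebra.
From mathcomp Require Import reals.
Import GRing.Theory.
Local Open Scope ring_scope.
Set Implicit Arguments. Unset Strict Implicit. Unset Printing Implicit Defensive.

Lemma rank_sumsmx_free (F : fieldType) (k n : nat) (A_ : 'I_k -> 'M[F]_n) :
  (forall u : 'I_k -> 'rV[F]_n, (forall i, (u i <= A_ i)%MS) ->
     \sum_i u i = 0 -> forall i, u i = 0) ->
  \rank (\sum_(i < k) A_ i)%MS = (\sum_(i < k) \rank (A_ i))%N.
Proof.
move=> free; suff : mxdirect (\sum_(i < k) A_ i) by rewrite mxdirectE => /eqP.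
apply/mxdirect_sumsP => i _; apply/eqP/rowV0P => v.
rewrite sub_capmx => /andP[vAi /sub_sumsmxP[w def_v]].
pose u j := if j == i then - v else w j *m A_ j.
have uA j : (u j <= A_ j)%MS.
  by rewrite /u; case: eqP => [->|_]; [rewrite eqmx_opp | exact: submxMl].
have u_sum0 : \sum_j u j = 0.
  rewrite (bigD1 i) //= /u eqxx (eq_bigr (fun j => w j *m A_ j)).
    by rewrite -def_v addNr.
  by move=> j /negbTE ->.
by apply/eqP; rewrite -oppr_eq0; have := free u uA u_sum0 i; rewrite /u eqxx => ->.
Qed.

Section Walks.
Variables (C Rx : finType) (src tgt : Rx -> C).

Lemma adj_sym (P : pred Rx) : symmetric (adj src tgt P).
Proof.
move=> x y; apply/existsP/existsP => -[r xy]; exists r; move: xy;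
  by case: (P r) => //=; rewrite orbC.
Qed.

Lemma walk_verts_of_path (P : pred Rx) (x : C) (s : seq C) :
  path (adj src tgt P) x s ->
  exists2 p, walk_verts src tgt x p = Some (x :: s) & all P p.
Proof.
elim: s x => [|z s IHs] x /=; first by exists [::].
case/andP => /existsP[r /andP[Pr xz]] /IHs[p walk_p Pp].
exists (r :: p); last by rewrite /= Pr.
rewrite /=; case/orP: xz => /andP[/eqP-> /eqP->]; first by rewrite eqxx walk_p.
by case: eqP => [<-|_]; rewrite ?eqxx walk_p.
Qed.

Lemma connect_is_path (P : pred Rx) (x y : C) :
  connect (adj src tgt P) x y -> x != y ->
  exists r p, is_path src tgt x y (r :: p) /\ P r.
Proof.
case/connectP => s xs ->; have [s' xs' uniq_s' _] := shortenP xs.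
have [[|r p] walk_p Pp] := walk_verts_of_path xs'.
  by case: walk_p => <-; rewrite eqxx.
exists r, p; split; last by case/andP: Pp.
by rewrite /is_path walk_p uniq_s' /=.
Qed.

End Walks.

Section IncidenceImage.
Variables (C Rx : finType) (src tgt : Rx -> C) (F : fieldType).

Definition vcoord (v : 'rV[F]_#|C|) (x : C) : F := v 0 (enum_rank x).

Definition col_of_fun (f : C -> F) : 'cV[F]_#|C| := \col_j f (enum_val j).

Lemma vcoord_inj (v w : 'rV[F]_#|C|) : vcoord v =1 vcoord w -> v = w.
Proof. by move=> vw; apply/rowP => j; rewrite -(enum_valK j); apply: vw. Qed.

Lemma mul_col_of_fun (v : 'rV[F]_#|C|) (f : C -> F) :
  (v *m col_of_fun f) 0 0 = \sum_x vcoord v x * f x.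
Proof.
rewrite mxE (reindex (@enum_val C predT)); last exact/onW_bij/enum_val_bij.
by apply: eq_bigr => j _; rewrite /vcoord enum_valK mxE.
Qed.

Lemma sum_indicator_mul (a : C) (g : C -> F) : \sum_x (x == a)%:R * g x = g a.
Proof.
by rewrite (bigD1 a) //= eqxx mul1r big1 ?addr0 // => x /negbTE->; rewrite mul0r.
Qed.

Lemma vcoord_inc_row (r : Rx) (x : C) :
  vcoord (inc_row src tgt F r) x = (x == tgt r)%:R - (x == src r)%:R.
Proof. by rewrite /vcoord mxE enum_rankK. Qed.

Lemma img_orthogonal (P : pred Rx) (f : C -> F) (v : 'rV[F]_#|C|) :
  (forall r, P r -> f (tgt r) = f (src r)) ->
  (v <= img src tgt F P)%MS -> \sum_x vcoord v x * f x = 0.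
Proof.
move=> f_inv vP; rewrite -mul_col_of_fun.
suff /sub_kermxP-> : (v <= kermx (col_of_fun f))%MS by rewrite mxE.
apply: submx_trans vP _; apply/sumsmx_subP => r Pr; rewrite genmxE.
apply/sub_kermxP/matrixP => i j; rewrite !ord1 [RHS]mxE mul_col_of_fun.
under eq_bigr => x _ do rewrite vcoord_inc_row mulrBl.
by rewrite sumrB !sum_indicator_mul f_inv ?subrr.
Qed.

Lemma img_vcoord_eq0 (P : pred Rx) (x : C) (v : 'rV[F]_#|C|) :
  (forall r, P r -> (src r != x) && (tgt r != x)) ->
  (v <= img src tgt F P)%MS -> vcoord v x = 0.
Proof.
move=> x_out vP; rewrite -(sum_indicator_mul x (vcoord v)).
rewrite -[RHS](img_orthogonal (f := fun z => (z == x)%:R) _ vP).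
  by apply: eq_bigr => z _; rewrite mulrC.
by move=> r /x_out/andP[/negbTE-> /negbTE->].
Qed.

Lemma img_linkage_orthogonal (P : pred Rx) (y : C) (v : 'rV[F]_#|C|) :
  (v <= img src tgt F P)%MS ->
  \sum_x vcoord v x * (connect (adj src tgt P) y x)%:R = 0.
Proof.
apply: img_orthogonal => r Pr.
have e : adj src tgt P (src r) (tgt r) by apply/existsP; exists r; rewrite Pr !eqxx.
suff -> : connect (adj src tgt P) y (tgt r) = connect (adj src tgt P) y (src r) by [].
apply/idP/idP => yr; apply: connect_trans yr (connect1 _) => //.
by rewrite adj_sym.
Qed.

Lemma img_two_support_eq0 (P : pred Rx) (a b : C) (v : 'rV[F]_#|C|) :
  a != b -> ~~ connect (adj src tgt P) a b ->
  (forall z, z != a -> z != b -> vcoord v z = 0) ->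
  (v <= img src tgt F P)%MS -> v = 0.
Proof.
move=> ab not_ab supp vP.
have sum_ab g : \sum_x vcoord v x * g x = vcoord v a * g a + vcoord v b * g b.
  rewrite (bigD1 a) //= (bigD1 b) 1?eq_sym //= big1 ?addr0 //.
  by move=> z /andP[za zb]; rewrite supp ?mul0r.
have not_ba : ~~ connect (adj src tgt P) b a.
  by rewrite (sym_connect_sym (adj_sym src tgt P)).
have := img_linkage_orthogonal a vP; have := img_linkage_orthogonal b vP.
rewrite !sum_ab !connect0 (negbTE not_ab) (negbTE not_ba).
rewrite !mulr0 !mulr1 addr0 add0r => vb va.
apply: vcoord_inj => z; rewrite [RHS]/vcoord mxE.
have [->|za] := eqVneq z a; first exact: va.
by have [->|zb] := eqVneq z b; [exact: vb | exact: supp].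
Qed.

Variables (k : nat) (part : Rx -> 'I_k).

Lemma img_partition :
  (img src tgt F predT == \sum_(i < k) img_sub src tgt part F i)%MS.
Proof.
rewrite /img_sub /img (partition_big part predT) //.
under eq_bigr => i _ do under eq_bigl => r do rewrite andTb.
by apply/andP; split.
Qed.

Lemma img_sub_vcoord_eq0 (i : 'I_k) (x : C) (v : 'rV[F]_#|C|) :
  (v <= img_sub src tgt part F i)%MS -> x \notin cplx src tgt part i ->
  vcoord v x = 0.
Proof.
move=> vi xi; apply: img_vcoord_eq0 vi => r ri.
rewrite -negb_or; apply: contra xi => rx.
by rewrite inE; apply/existsP; exists r; rewrite ri.
Qed.

End IncidenceImage.

Section TwoCommonComplexes.
Variables (F : fieldType) (C Rx : finType) (src tgt : Rx -> C).
Variables (k : nat) (part : Rx -> 'I_k) (y1 y2 : C).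
Hypothesis CD_part : is_CD_decomposition src tgt part.
Hypothesis common_y12 : common src tgt part = [set y1; y2].
Hypothesis y1_neq_y2 : y1 != y2.
Hypothesis unique_path :
  forall p q : seq Rx, is_path src tgt y1 y2 p -> is_path src tgt y1 y2 q -> p = q.

Let A := img_sub src tgt part F.
Let linked (i : 'I_k) := connect (adj src tgt (fun r => part r == i)) y1 y2.

Lemma linked_unique (i j : 'I_k) : linked i -> linked j -> i = j.
Proof.
move=> /connect_is_path/(_ y1_neq_y2)[r [p [path_rp /eqP<-]]].
move=> /connect_is_path/(_ y1_neq_y2)[r' [p' [path_rp' /eqP<-]]].
by case: (unique_path path_rp path_rp') => ->.
Qed.

Lemma img_sub_relation_support (u : 'I_k -> 'rV[F]_#|C|) (i : 'I_k) (z : C) :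
  (forall j, (u j <= A j)%MS) -> \sum_j u j = 0 ->
  z != y1 -> z != y2 -> vcoord (u i) z = 0.
Proof.
move=> uA u_sum0 z1 z2.
have [zi|] := boolP (z \in cplx src tgt part i); last exact: img_sub_vcoord_eq0 (uA i).
have : vcoord (\sum_j u j) z = 0 by rewrite u_sum0 /vcoord mxE.
rewrite /vcoord summxE (bigD1 i) //= big1 ?addr0 // => j ji.
apply: img_sub_vcoord_eq0 (uA j) _; apply/negP => zj.
have : z \in cplx src tgt part j :&: cplx src tgt part i by rewrite inE zj.
by rewrite (CD_part ji) common_y12 !inE (negbTE z1) (negbTE z2).
Qed.

Lemma img_sub_free (u : 'I_k -> 'rV[F]_#|C|) :
  (forall i, (u i <= A i)%MS) -> \sum_i u i = 0 -> forall i, u i = 0.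
Proof.
move=> uA u_sum0.
have unlinked_eq0 i : ~~ linked i -> u i = 0.
  move=> not_i; apply: img_two_support_eq0 y1_neq_y2 not_i _ (uA i).
  by move=> z; apply: img_sub_relation_support.
move=> i; have [lin_i|] := boolP (linked i); last exact: unlinked_eq0.
rewrite -u_sum0 (bigD1 i) //= big1 ?addr0 // => j ji.
by apply: unlinked_eq0; apply: contra ji => /linked_unique/(_ lin_i)->.
Qed.

End TwoCommonComplexes.

Theorem proposition7 (R : realType) (C Rx : finType) (src tgt : Rx -> C)
    (k : nat) (part : Rx -> 'I_k) (y1 y2 : C) :
  is_CRN src tgt ->
  is_decomposition part ->
  is_CD_decomposition src tgt part ->
  common src tgt part = [set y1; y2] ->
  y1 != y2 ->
  (2 < n_linkage src tgt)%N ->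
  (forall p q : seq Rx, is_path src tgt y1 y2 p -> is_path src tgt y1 y2 q -> p = q) ->
  incidence_independent src tgt part R.
Proof.
move=> _ _ CD_part common_y12 y1_neq_y2 _ unique_path; split.
  exact: img_partition.
exact/rank_sumsmx_free/(img_sub_free CD_part common_y12 y1_neq_y2 unique_path).
Qed.
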